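(* Let $(\mathcal A,\lambda_0,S_0)$ be a substitution datum over a dilation datum $(G,d,(D_\lambda)_{\lambda>0},\Gamma,V)$, $D:=D_{\lambda_0}$. Then there is a unique map $S:\mathcal A^{**}_\Gamma\to\mathcal A^{**}_\Gamma$ satisfying: (E1) $S(P_a)=S_0(a)$ for all $a\in\mathcal A$; (E2) for all $\gamma\in\Gamma$ and $P\in\mathcal A^{**}_\Gamma$: $\mathrm{supp}(S(\gamma P))=D(\gamma)\,\mathrm{supp}(S(P))$ and $S(\gamma P)=D(\gamma)S(P)$; (E3) if $(M_i)_{i\in I}$ are subsets of $\Gamma$ with $M=\bigcup_iM_i$ and $P\in\mathcal A^M$, then $\mathrm{supp}(S(P))=\bigcup_i\mathrm{supp}(S(P|_{M_i}))$ and $S(P)(\gamma)=S(P|_{M_i})(\gamma)$ for all $i$ and all $\gamma\in\mathrm{supp}(S(P|_{M_i}))$. This map is the substitution map of Construction below, it satisfies $S^n(\gamma P)=D^n(\gamma)S^n(P)$ for all $P$, $\gamma\in\Gamma$, $n\in\mathbb N$, it maps $\mathcal A^\Gamma$ into $\mathcal A^\Gamma$, and its restriction $S:\mathcal A^\Gamma\to\mathcal A^\Gamma$ is continuous for the product topology.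
   Context: Dilation datum $(G,d,(D_\lambda),\Gamma,V)$: $G$ connected lcsc group, $d$ left-invariant metric inducing the topology, $\lambda\mapsto D_\lambda$ homomorphism $(\mathbb R_{>0},\cdot)\to\mathrm{Aut}(G)$ with $d(D_\lambda g,D_\lambda h)=\lambda d(g,h)$; $\Gamma$ uniform lattice with $D_\lambda(\Gamma)\subset\Gamma$ for some $\lambda>1$; $V$ bounded Borel set containing an open identity neighbourhood with $G=\bigsqcup_{\gamma\in\Gamma}\gamma V$. Substitution datum $(\mathcal A,\lambda_0,S_0)$: finite $\mathcal A$; $\lambda_0>1+r_+/r_-$ for some $0<r_-<r_+$ with $B(e,r_-)\subset V\subset B(e,r_+)$; $D_{\lambda_0}(\Gamma)\subset\Gamma$; $S_0:\mathcal A\to\mathcal A^{D(V)\cap\Gamma}$. A patch is $P\in\mathcal A^M$ for some $M\subset\Gamma$, $\mathrm{supp}(P)=M$; $\mathcal A^{**}_\Gamma$ is the set of all patches; $P_a$ has support $\{e\}$ and value $a$; $\Gamma$ acts by $\mathrm{supp}(\gamma P)=\gamma\,\mathrm{supp}(P)$, $(\gamma P)(x)=P(\gamma^{-1}x)$; $P|_M$ is the restriction to $\mathrm{supp}(P)\cap M$. Construction: for $P$ with support $M$, $\mathrm{supp}(S(P))=D(MV)\cap\Gamma$, and for $\gamma$ in it, with the unique $\eta\in M$ such that $\gamma\in D(\eta)(D(V)\cap\Gamma)$, $S(P)(\gamma):=S_0(P(\eta))(D(\eta)^{-1}\gamma)$. *)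

From Stdlib Require Import Reals List ClassicalDescription.
Open Scope R_scope.
Set Implicit Arguments.

Section Topology.
Variable G : Type.
Variable d : G -> G -> R.

Definition ball (x : G) (r : R) : G -> Prop := fun y => d x y < r.

Definition d_open (U : G -> Prop) : Prop :=
  forall x, U x -> exists r, 0 < r /\ forall y, d x y < r -> U y.

Definition d_compact (K : G -> Prop) : Prop :=
  forall (I : Type) (U : I -> G -> Prop),
    (forall i, d_open (U i)) -> (forall x, K x -> exists i, U i x) ->
    exists l : list I, forall x, K x -> exists i, In i l /\ U i x.

Definition d_locally_compact : Prop :=
  forall x, exists K U, d_compact K /\ d_open U /\ U x /\ (forall y, U y -> K y).

Definition d_second_countable : Prop :=
  exists B : nat -> G -> Prop, (forall n, d_open (B n)) /\
    forall U, d_open U -> forall x, U x -> exists n, B n x /\ (forall y, B n y -> U y).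

Definition d_connected : Prop :=
  forall U, d_open U -> d_open (fun x => ~ U x) -> (forall x, U x) \/ (forall x, ~ U x).

Definition d_continuous (f : G -> G) : Prop :=
  forall x eps, 0 < eps -> exists del, 0 < del /\
    forall y, d x y < del -> d (f x) (f y) < eps.

Definition d_continuous2 (f : G -> G -> G) : Prop :=
  forall x y eps, 0 < eps -> exists del, 0 < del /\
    forall x' y', d x x' < del -> d y y' < del -> d (f x y) (f x' y') < eps.

Definition d_bounded (V : G -> Prop) : Prop :=
  exists x0 r, forall v, V v -> d x0 v <= r.

Definition d_Borel (X : G -> Prop) : Prop :=
  forall F : (G -> Prop) -> Prop,
    (forall U, d_open U -> F U) ->
    (forall Y, F Y -> F (fun x => ~ Y x)) ->
    (forall Y : nat -> G -> Prop, (forall n, F (Y n)) -> F (fun x => exists n, Y n x)) ->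
    F X.

Definition is_metric : Prop :=
  (forall x y, 0 <= d x y) /\ (forall x y, d x y = 0 <-> x = y) /\
  (forall x y, d x y = d y x) /\ (forall x y z, d x z <= d x y + d y z).

End Topology.

Section Dilation.
Variables (G : Type) (mul : G -> G -> G) (inv : G -> G) (e : G) (d : G -> G -> R).

Definition is_group : Prop :=
  (forall x y z, mul x (mul y z) = mul (mul x y) z) /\
  (forall x, mul e x = x) /\ (forall x, mul x e = x) /\
  (forall x, mul (inv x) x = e) /\ (forall x, mul x (inv x) = e).

Definition is_top_aut (f : G -> G) : Prop :=
  (forall x y, f (mul x y) = mul (f x) (f y)) /\
  (forall x y, f x = f y -> x = y) /\ (forall y, exists x, f x = y) /\
  d_continuous d f /\
  (forall U, d_open d U -> d_open d (fun y => exists x, U x /\ f x = y)).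

Definition is_subgroup (Gam : G -> Prop) : Prop :=
  Gam e /\ (forall x y, Gam x -> Gam y -> Gam (mul x y)) /\
  (forall x, Gam x -> Gam (inv x)).

Definition uniform_lattice (Gam : G -> Prop) : Prop :=
  is_subgroup Gam /\
  (forall g, Gam g -> exists r, 0 < r /\ forall h, Gam h -> d g h < r -> h = g) /\
  (exists K, d_compact d K /\ forall g, exists gam k, Gam gam /\ K k /\ g = mul gam k).

Definition dilation_datum (D : R -> G -> G) (Gam V : G -> Prop) : Prop :=
  is_group /\ is_metric d /\
  (forall g x y, d (mul g x) (mul g y) = d x y) /\
  d_continuous2 d mul /\ d_continuous d inv /\
  d_connected d /\ d_locally_compact d /\ d_second_countable d /\
  (forall l, 0 < l -> is_top_aut (D l)) /\
  (forall l m, 0 < l -> 0 < m -> forall x, D (l * m) x = D l (D m x)) /\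
  (forall l, 0 < l -> forall g h, d (D l g) (D l h) = l * d g h) /\
  uniform_lattice Gam /\
  (exists l, 1 < l /\ forall g, Gam g -> Gam (D l g)) /\
  d_bounded d V /\ d_Borel d V /\
  (exists U, d_open d U /\ U e /\ forall x, U x -> V x) /\
  (* G is the disjoint union of the translates gamma V, gamma in Gamma *)
  (forall g, exists gam, Gam gam /\ V (mul (inv gam) g) /\
     forall gam', Gam gam' -> V (mul (inv gam') g) -> gam' = gam).

(* Patches: a patch P in A^M (M a subset of Gamma) is encoded as a map
   G -> option A with support M = {x | P x <> None}. *)
Definition is_patch (A : Type) (Gam : G -> Prop) (P : G -> option A) : Prop :=
  forall x, P x <> None -> Gam x.

Definition is_full_patch (A : Type) (Gam : G -> Prop) (P : G -> option A) : Prop :=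
  forall x, Gam x <-> P x <> None.

Definition supp (A : Type) (P : G -> option A) : G -> Prop := fun x => P x <> None.

Definition translate (A : Type) (gam : G) (P : G -> option A) : G -> option A :=
  fun x => P (mul (inv gam) x).

Definition point_patch (A : Type) (a : A) : G -> option A :=
  fun x => if excluded_middle_informative (x = e) then Some a else None.

Definition restrict (A : Type) (P : G -> option A) (M : G -> Prop) : G -> option A :=
  fun x => match P x with Some a => (if excluded_middle_informative (M x) then Some a else None) | None => None end.


Definition finite_type (A : Type) : Prop := exists l : list A, forall a, In a l.

Definition substitution_datum (D : R -> G -> G) (Gam V : G -> Prop)
    (A : Type) (lam0 : R) (S0 : A -> G -> option A) : Prop :=
  finite_type A /\
  (exists rm rp, 0 < rm /\ rm < rp /\
     (forall x, ball d e rm x -> V x) /\ (forall x, V x -> ball d e rp x) /\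
     1 + rp / rm < lam0) /\
  (forall g, Gam g -> Gam (D lam0 g)) /\
  (forall a x, S0 a x <> None <-> (Gam x /\ exists v, V v /\ x = D lam0 v)).

(* S is (on patches) the substitution map of the Construction:
   supp S(P) = D(MV) cap Gamma, and S(P)(gamma) = S0(P(eta))(D(eta)^-1 gamma)
   for eta in M = supp P with gamma in D(eta)(D(V) cap Gamma), i.e.
   gamma = D(eta) delta with delta in D(V) cap Gamma. *)
Definition is_construction (D : R -> G -> G) (Gam V : G -> Prop)
    (A : Type) (lam0 : R) (S0 : A -> G -> option A)
    (S : (G -> option A) -> (G -> option A)) : Prop :=
  forall P, is_patch Gam P ->
    (forall x, S P x <> None <->
        (Gam x /\ exists m v, P m <> None /\ V v /\ x = D lam0 (mul m v))) /\
    (forall eta a del, P eta = Some a -> Gam del ->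
        (exists v, V v /\ del = D lam0 v) ->
        S P (mul (D lam0 eta) del) = S0 a del).

(* continuity of S restricted to A^Gamma, for the product topology
   (A discrete); opens of A^Gamma: unions of cylinder sets over finite F *)
Definition prod_open (A : Type) (Gam : G -> Prop) (U : (G -> option A) -> Prop) : Prop :=
  (forall P, U P -> is_full_patch Gam P) /\
  forall P, U P -> exists F : list G, (forall x, In x F -> Gam x) /\
    forall Q, is_full_patch Gam Q -> (forall x, In x F -> Q x = P x) -> U Q.

Definition prod_continuous (A : Type) (Gam : G -> Prop)
    (S : (G -> option A) -> (G -> option A)) : Prop :=
  forall U, prod_open Gam U ->
    prod_open Gam (fun P => is_full_patch Gam P /\ U (S P)).

End Dilation.

(** Every point of [Gam] lies in [D(eta) (D(V) ∩ Gam)] for at most one [eta ∈ Gam]: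
    [D] is an injective homomorphism and the translates [gam V] are disjoint.  So the
    value of [S(P)] at [x] can only come from the unique tile [eta] of [supp P] whose
    image [D(eta) D(V)] contains [x], which makes [S] local, equivariant and determined
    by its values [S0 a] on one-point patches.  Continuity for the product topology
    holds because each value of [S(P)] depends on a single value of [P]. *)

From Stdlib Require Import Reals List Lra.
From Stdlib Require Import ClassicalDescription IndefiniteDescription FunctionalExtensionality.
Open Scope R_scope.
Set Implicit Arguments.

Lemma option_ext (A : Type) (o1 o2 : option A) :
  (forall b, o1 = Some b <-> o2 = Some b) -> o1 = o2.
Proof.
  intros H. destruct o1 as [a|], o2 as [c|]; auto.
  - apply H. reflexivity.
  - symmetry. apply H. reflexivity.
  - apply H. reflexivity.
Qed.

Lemma list_choice (X Y : Type) (R : X -> Y -> Prop) (F : list X) :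
  (forall x, In x F -> exists y, R x y) ->
  exists F', (forall y, In y F' -> exists x, R x y) /\
    forall x, In x F -> exists y, In y F' /\ R x y.
Proof.
  induction F as [|x F IH]; intros H.
  - exists nil. split; intros x [].
  - destruct IH as [F' [HF' HF]]; [intros y Hy; apply H; right; exact Hy|].
    destruct (H x (or_introl eq_refl)) as [y Hy].
    exists (y :: F'). split.
    + intros w [<-|Hw]; [exists x; exact Hy|exact (HF' w Hw)].
    + intros z [<-|Hz]; [exists y; split; [left|]; auto|].
      destruct (HF z Hz) as [w [Hw Rw]]. exists w. split; [right|]; assumption.
Qed.

Definition restriction_local (G A : Type) (Gam : G -> Prop)
    (S : (G -> option A) -> (G -> option A)) : Prop :=
  forall (I : Type) (M : I -> G -> Prop) (P : G -> option A),
    (forall i x, M i x -> Gam x) ->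
    (forall x, supp P x <-> exists i, M i x) ->
    (forall x, supp (S P) x <-> exists i, supp (S (restrict P (M i))) x) /\
    (forall i x, supp (S (restrict P (M i))) x -> S P x = S (restrict P (M i)) x).

Lemma restriction_local_ext (G A : Type) (Gam : G -> Prop)
    (S1 S2 : (G -> option A) -> (G -> option A)) (P : G -> option A) :
  restriction_local Gam S1 -> restriction_local Gam S2 -> is_patch Gam P ->
  (forall eta, supp P eta ->
     S1 (restrict P (fun x => x = eta)) = S2 (restrict P (fun x => x = eta))) ->
  S1 P = S2 P.
Proof.
  intros loc1 loc2 HP Hpt.
  pose (M := fun (i : {eta | supp P eta}) x => x = proj1_sig i).
  assert (HM : forall i x, M i x -> Gam x).
  { intros [y Hy] x ->. apply HP. exact Hy. }
  assert (Hcov : forall x, supp P x <-> exists i, M i x).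
  { intros x. split.
    - intros H. exists (exist _ x H). reflexivity.
    - intros [[y Hy] ->]. exact Hy. }
  assert (Hi : forall i, S1 (restrict P (M i)) = S2 (restrict P (M i))).
  { intros [eta Heta]. apply Hpt. exact Heta. }
  destruct (loc1 _ M P HM Hcov) as [supp1 val1].
  destruct (loc2 _ M P HM Hcov) as [supp2 val2].
  apply functional_extensionality. intros x.
  destruct (S1 P x) as [b|] eqn:E1.
  - destruct (proj1 (supp1 x)) as [i Hx]; [unfold supp; congruence|].
    rewrite Hi in Hx. rewrite val2 with (i := i) by exact Hx.
    rewrite <- Hi, <- val1; [congruence|]. rewrite Hi. exact Hx.
  - destruct (S2 P x) as [b|] eqn:E2; [|reflexivity].
    destruct (proj1 (supp2 x)) as [i Hx]; [unfold supp; congruence|].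
    rewrite <- Hi in Hx. exfalso. apply (proj2 (supp1 x)); [exists i; exact Hx|exact E1].
Qed.

Section Substitution.

Variables (G A : Type) (mul : G -> G -> G) (inv : G -> G) (e : G).
Hypothesis mulA : forall x y z, mul x (mul y z) = mul (mul x y) z.
Hypothesis mul1g : forall x, mul e x = x.
Hypothesis mulg1 : forall x, mul x e = x.
Hypothesis mulVg : forall x, mul (inv x) x = e.
Hypothesis mulgV : forall x, mul x (inv x) = e.

Lemma mulKg a x : mul (inv a) (mul a x) = x.
Proof. rewrite mulA, mulVg, mul1g. reflexivity. Qed.

Lemma mulKVg a x : mul a (mul (inv a) x) = x.
Proof. rewrite mulA, mulgV, mul1g. reflexivity. Qed.

Lemma inv_eq_of_mul z w : mul z w = e -> z = inv w.
Proof. intros H. rewrite <- (mulg1 z), <- (mulgV w), mulA, H, mul1g. reflexivity. Qed.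

Lemma invMg a b : inv (mul a b) = mul (inv b) (inv a).
Proof.
  symmetry. apply inv_eq_of_mul.
  rewrite <- mulA, (mulA (inv a)), mulVg, mul1g, mulVg. reflexivity.
Qed.

Lemma invgK a : inv (inv a) = a.
Proof. symmetry. apply inv_eq_of_mul. apply mulgV. Qed.

Lemma inv1 : inv e = e.
Proof. symmetry. apply inv_eq_of_mul. apply mul1g. Qed.

Lemma eq_mulVg1 a x : a = x <-> mul (inv a) x = e.
Proof.
  split; [intros <-; apply mulVg|].
  intros H. rewrite <- (mulKVg a x), H, mulg1. reflexivity.
Qed.

Lemma supp_translate (P : G -> option A) g x :
  supp (translate mul inv g P) x <-> exists y, supp P y /\ x = mul g y.
Proof.
  unfold supp, translate. split.
  - intros H. exists (mul (inv g) x). split; [exact H|]. rewrite mulKVg. reflexivity.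
  - intros [y [Hy ->]]. rewrite mulKg. exact Hy.
Qed.

Variable Dl : G -> G.
Hypothesis Dl_morph : forall x y, Dl (mul x y) = mul (Dl x) (Dl y).
Hypothesis Dl_inj : forall x y, Dl x = Dl y -> x = y.

Lemma Dl1 : Dl e = e.
Proof.
  rewrite <- (mulVg (Dl e)) at 2. rewrite <- (mulKg (Dl e) (Dl e)) at 1.
  rewrite <- Dl_morph, mul1g. reflexivity.
Qed.

Lemma Dl_inv g : Dl (inv g) = inv (Dl g).
Proof. apply inv_eq_of_mul. rewrite <- Dl_morph, mulVg. exact Dl1. Qed.

Variables (Gam V : G -> Prop) (S0 : A -> G -> option A).
Hypothesis Gam1 : Gam e.
Hypothesis Gam_mul : forall x y, Gam x -> Gam y -> Gam (mul x y).
Hypothesis Gam_inv : forall x, Gam x -> Gam (inv x).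
Hypothesis Gam_Dl : forall x, Gam x -> Gam (Dl x).
Hypothesis S0_supp : forall a x, S0 a x <> None <-> Gam x /\ exists v, V v /\ x = Dl v.
Hypothesis tiling : forall g, exists gam, Gam gam /\ V (mul (inv gam) g) /\
  forall gam', Gam gam' -> V (mul (inv gam') g) -> gam' = gam.

Lemma tile_unique eta eta' a a' x : Gam eta -> Gam eta' ->
  S0 a (mul (inv (Dl eta)) x) <> None -> S0 a' (mul (inv (Dl eta')) x) <> None ->
  eta = eta'.
Proof.
  intros Geta Geta' H H'.
  apply S0_supp in H as [_ [v [Hv Ev]]]. apply S0_supp in H' as [_ [v' [Hv' Ev']]].
  assert (Ex : x = Dl (mul eta v)) by (rewrite Dl_morph, <- Ev, mulKVg; reflexivity).
  assert (Ex' : x = Dl (mul eta' v')) by (rewrite Dl_morph, <- Ev', mulKVg; reflexivity).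
  rewrite Ex in Ex'. apply Dl_inj in Ex'.
  destruct (tiling (mul eta v)) as [gam [_ [_ Ugam]]].
  transitivity gam.
  - apply Ugam; [exact Geta|]. rewrite mulKg. exact Hv.
  - symmetry. apply Ugam; [exact Geta'|]. rewrite Ex', mulKg. exact Hv'.
Qed.

Definition subst (P : G -> option A) (x : G) : option A :=
  match excluded_middle_informative
    (exists p : G * A, Gam (fst p) /\ P (fst p) = Some (snd p) /\
        S0 (snd p) (mul (inv (Dl (fst p))) x) <> None) with
  | left H => let p := proj1_sig (constructive_indefinite_description _ H) in
              S0 (snd p) (mul (inv (Dl (fst p))) x)
  | right _ => None
  end.

Lemma subst_Some P x b :
  subst P x = Some b <->
  exists eta a, Gam eta /\ P eta = Some a /\ S0 a (mul (inv (Dl eta)) x) = Some b.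
Proof.
  unfold subst. destruct excluded_middle_informative as [H|H].
  - destruct (constructive_indefinite_description _ H) as [[eta a] [Geta [Pa Sa]]].
    simpl in *. split.
    + intros Hb. exists eta, a. auto.
    + intros [eta' [a' [Geta' [Pa' Sa']]]].
      assert (eta = eta') as <-.
      { apply (@tile_unique eta eta' a a' x); auto. rewrite Sa'. discriminate. }
      congruence.
  - split; [discriminate|].
    intros [eta [a [Geta [Pa Sa]]]]. exfalso. apply H. exists (eta, a). simpl.
    rewrite Sa. repeat split; auto. discriminate.
Qed.

Lemma subst_supp P x :
  supp (subst P) x <->
  exists eta a, Gam eta /\ P eta = Some a /\ S0 a (mul (inv (Dl eta)) x) <> None.
Proof.
  unfold supp. split.
  - intros H. destruct (subst P x) as [b|] eqn:Hb; [|congruence].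
    apply subst_Some in Hb as [eta [a [Geta [Pa Sa]]]].
    exists eta, a. rewrite Sa. repeat split; auto; discriminate.
  - intros [eta [a [Geta [Pa Sa]]]].
    destruct (S0 a (mul (inv (Dl eta)) x)) as [b|] eqn:Hb; [|congruence].
    rewrite (proj2 (subst_Some P x b)) by eauto. discriminate.
Qed.

Lemma subst_patch P : is_patch Gam (subst P).
Proof.
  intros x H. apply subst_supp in H as [eta [a [Geta [_ Sa]]]].
  apply S0_supp in Sa as [Gy _]. rewrite <- (mulKVg (Dl eta) x).
  apply Gam_mul; auto.
Qed.

Lemma subst_point a : subst (point_patch e a) = S0 a.
Proof.
  apply functional_extensionality. intros x. apply option_ext. intros b.
  rewrite subst_Some. unfold point_patch. split.
  - intros [eta [a' [_ [Pa Sa]]]].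
    destruct excluded_middle_informative as [->|]; [|discriminate].
    injection Pa as <-. rewrite Dl1, inv1, mul1g in Sa. exact Sa.
  - intros H. exists e, a. rewrite Dl1, inv1, mul1g.
    destruct excluded_middle_informative; tauto.
Qed.

Lemma subst_translate gam P : Gam gam ->
  subst (translate mul inv gam P) = translate mul inv (Dl gam) (subst P).
Proof.
  intros Ggam. apply functional_extensionality. intros x. apply option_ext. intros b.
  unfold translate. rewrite !subst_Some. split.
  - intros [eta [a [Geta [Pa Sa]]]]. exists (mul (inv gam) eta), a.
    split; [apply Gam_mul; auto|]. split; [exact Pa|].
    rewrite Dl_morph, Dl_inv, invMg, invgK, <- mulA, mulKVg. exact Sa.
  - intros [eta [a [Geta [Pa Sa]]]]. exists (mul gam eta), a.
    split; [apply Gam_mul; auto|]. rewrite mulKg. split; [exact Pa|].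
    rewrite Dl_morph, invMg, <- mulA. exact Sa.
Qed.

Lemma subst_iter_translate P gam n : Gam gam ->
  Nat.iter n subst (translate mul inv gam P) =
  translate mul inv (Nat.iter n Dl gam) (Nat.iter n subst P).
Proof.
  intros Ggam.
  assert (Giter : forall k, Gam (Nat.iter k Dl gam)) by (induction k; simpl; auto).
  induction n as [|n IH]; simpl; [reflexivity|].
  rewrite IH. apply subst_translate. apply Giter.
Qed.

Lemma restrict_Some (P : G -> option A) M x a :
  restrict P M x = Some a <-> P x = Some a /\ M x.
Proof.
  unfold restrict. destruct (P x); [destruct excluded_middle_informative|];
    intuition congruence.
Qed.

Lemma subst_local : restriction_local Gam subst.
Proof.
  intros I M P _ Hcov.
  assert (from_piece : forall i x b, subst (restrict P (M i)) x = Some b -> subst P x = Some b).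
  { intros i x b. rewrite !subst_Some. intros [eta [a [Geta [Pa Sa]]]].
    apply restrict_Some in Pa. exists eta, a. tauto. }
  assert (to_piece : forall x b, subst P x = Some b ->
                       exists i, subst (restrict P (M i)) x = Some b).
  { intros x b. rewrite subst_Some. intros [eta [a [Geta [Pa Sa]]]].
    destruct (proj1 (Hcov eta)) as [i Hi]; [unfold supp; congruence|].
    exists i. apply subst_Some. exists eta, a. rewrite restrict_Some. tauto. }
  unfold supp. split.
  - intros x. split.
    + intros H. destruct (subst P x) as [b|] eqn:Hb; [|congruence].
      destruct (to_piece x b Hb) as [i Hi]. exists i. congruence.
    + intros [i Hi]. destruct (subst (restrict P (M i)) x) as [b|] eqn:Hb; [|congruence].
      rewrite (from_piece i x b Hb). discriminate.
  - intros i x H. destruct (subst (restrict P (M i)) x) as [b|] eqn:Hb; [|congruence].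
    exact (from_piece i x b Hb).
Qed.

Lemma restrict_point (P : G -> option A) eta a : P eta = Some a ->
  restrict P (fun x => x = eta) = translate mul inv eta (point_patch e a).
Proof.
  intros Pa. apply functional_extensionality. intros x.
  unfold restrict, translate, point_patch.
  destruct (excluded_middle_informative (mul (inv eta) x = e)) as [h|h];
    rewrite <- eq_mulVg1 in h.
  - subst x. rewrite Pa. destruct excluded_middle_informative; congruence.
  - destruct (P x); [|reflexivity]. destruct excluded_middle_informative; congruence.
Qed.

Lemma subst_unique (S : (G -> option A) -> (G -> option A)) P :
  (forall a, S (point_patch e a) = S0 a) ->
  (forall gam Q, Gam gam -> is_patch Gam Q ->
     S (translate mul inv gam Q) = translate mul inv (Dl gam) (S Q)) ->
  restriction_local Gam S -> is_patch Gam P -> S P = subst P.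
Proof.
  intros S_point S_translate S_local HP.
  apply (restriction_local_ext S_local subst_local HP).
  intros eta Heta. destruct (P eta) as [a|] eqn:Pa; [|contradiction].
  assert (Geta : Gam eta) by (apply HP; congruence).
  assert (Ppoint : is_patch Gam (point_patch e a)).
  { intros x. unfold point_patch. destruct excluded_middle_informative; [congruence|tauto]. }
  rewrite (restrict_point P eta Pa), S_translate, subst_translate, S_point, subst_point; auto.
Qed.

Lemma subst_construction P : is_patch Gam P ->
  (forall x, subst P x <> None <->
     (Gam x /\ exists m v, P m <> None /\ V v /\ x = Dl (mul m v))) /\
  (forall eta a del, P eta = Some a -> Gam del ->
     (exists v, V v /\ del = Dl v) -> subst P (mul (Dl eta) del) = S0 a del).
Proof.
  intros HP. split.
  - intros x. apply (iff_trans (subst_supp P x)). split.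
    + intros [eta [a [Geta [Pa Sa]]]].
      split; [apply (subst_patch P); apply subst_supp; eauto|].
      apply S0_supp in Sa as [_ [v [Hv Ev]]].
      exists eta, v. rewrite Dl_morph, <- Ev, mulKVg. repeat split; auto. congruence.
    + intros [Gx [m [v [Pm [Hv ->]]]]].
      destruct (P m) as [a|] eqn:Pa; [|congruence].
      assert (Gm : Gam m) by (apply HP; congruence).
      exists m, a. rewrite Dl_morph, mulKg. repeat split; auto.
      apply S0_supp. split; [|eauto].
      rewrite <- (mulKg (Dl m) (Dl v)), <- Dl_morph. auto.
  - intros eta a del Pa Gdel Vdel.
    assert (Geta : Gam eta) by (apply HP; congruence).
    destruct (S0 a del) as [b|] eqn:Hb.
    + apply subst_Some. exists eta, a. rewrite mulKg. auto.
    + exfalso. apply (proj2 (S0_supp a del)); [split; auto|exact Hb].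
Qed.

Hypothesis Dl_surj : forall y, exists x, Dl x = y.

Lemma subst_full P : is_full_patch Gam P -> is_full_patch Gam (subst P).
Proof.
  intros HP x. split.
  - intros Gx. destruct (Dl_surj x) as [g <-]. destruct (tiling g) as [gam [Ggam [Vg _]]].
    apply (subst_construction (P := P)); [intros y; apply HP|].
    split; [exact Gx|]. exists gam, (mul (inv gam) g).
    rewrite mulKVg. repeat split; auto. apply HP. exact Ggam.
  - apply subst_patch.
Qed.

Lemma subst_prod_continuous : prod_continuous Gam subst.
Proof.
  intros U [U_full U_cyl]. split; [intros P [HP _]; exact HP|].
  intros P [HP HUP]. destruct (U_cyl _ HUP) as [F [GF HF]].
  pose (source x eta := Gam eta /\ exists a b, P eta = Some a /\
          S0 a (mul (inv (Dl eta)) x) = Some b /\ subst P x = Some b).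
  assert (Hsource : forall x, In x F -> exists eta, source x eta).
  { intros x Hx. assert (Sx := proj1 (subst_full HP x) (GF x Hx)).
    destruct (subst P x) as [b|] eqn:Hb; [|congruence].
    pose proof Hb as Hb'. apply subst_Some in Hb' as [eta [a [Geta [Pa Sa]]]].
    exists eta. split; [exact Geta|]. exists a, b. auto. }
  destruct (list_choice source F Hsource) as [F' [GF' HF']].
  exists F'. split.
  - intros y Hy. destruct (GF' y Hy) as [x [Gy _]]. exact Gy.
  - intros Q HQ QP. split; [exact HQ|]. apply HF; [apply subst_full; exact HQ|].
    intros x Hx. destruct (HF' x Hx) as [eta [Hin [Geta [a [b [Pa [Sa SPx]]]]]]].
    rewrite SPx. apply subst_Some. exists eta, a. rewrite QP; auto.
Qed.

End Substitution.

Lemma dilation_factor_pos (rm rp lam : R) :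
  0 < rm -> rm < rp -> 1 + rp / rm < lam -> 0 < lam.
Proof.
  intros Hrm Hrp Hlam. assert (0 < rp / rm) by (apply Rdiv_lt_0_compat; lra). lra.
Qed.

Theorem proposition2 (G : Type) (mul : G -> G -> G) (inv : G -> G) (e : G)
    (d : G -> G -> R) (D : R -> G -> G) (Gam V : G -> Prop)
    (A : Type) (lam0 : R) (S0 : A -> G -> option A)
    (hdil : dilation_datum mul inv e d D Gam V)
    (hsub : substitution_datum e d D Gam V lam0 S0) :
  let E1 (S : (G -> option A) -> (G -> option A)) :=
    forall a, S (point_patch e a) = S0 a in
  let E2 (S : (G -> option A) -> (G -> option A)) :=
    forall gam P, Gam gam -> is_patch Gam P ->
      (forall x, supp (S (translate mul inv gam P)) x <->
                 exists y, supp (S P) y /\ x = mul (D lam0 gam) y) /\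
      S (translate mul inv gam P) = translate mul inv (D lam0 gam) (S P) in
  let E3 (S : (G -> option A) -> (G -> option A)) :=
    forall (I : Type) (M : I -> G -> Prop) (P : G -> option A),
      (forall i x, M i x -> Gam x) ->
      (forall x, supp P x <-> exists i, M i x) ->
      (forall x, supp (S P) x <-> exists i, supp (S (restrict P (M i))) x) /\
      (forall i x, supp (S (restrict P (M i))) x -> S P x = S (restrict P (M i)) x) in
  exists S : (G -> option A) -> (G -> option A),
    (forall P, is_patch Gam P -> is_patch Gam (S P)) /\
    E1 S /\ E2 S /\ E3 S /\
    (forall S' : (G -> option A) -> (G -> option A),
       (forall P, is_patch Gam P -> is_patch Gam (S' P)) ->
       E1 S' -> E2 S' -> E3 S' ->
       forall P, is_patch Gam P -> S' P = S P) /\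
    is_construction mul D Gam V lam0 S0 S /\
    (forall P gam (n : nat), is_patch Gam P -> Gam gam ->
       Nat.iter n S (translate mul inv gam P) =
       translate mul inv (Nat.iter n (D lam0) gam) (Nat.iter n S P)) /\
    (forall P, is_full_patch Gam P -> is_full_patch Gam (S P)) /\
    prod_continuous Gam S.
Proof.
  cbv zeta.
  destruct hdil as [[mulA [mul1g [mulg1 [mulVg mulgV]]]]
    [_ [_ [_ [_ [_ [_ [_ [Haut [_ [_ [[[Gam1 [Gam_mul Gam_inv]] _] [_ [_ [_ [_ tiling]]]]]]]]]]]]]]]].
  destruct hsub as [_ [[rm [rp [Hrm [Hrp [_ [_ Hlam]]]]]] [Gam_Dl S0_supp]]].
  destruct (Haut lam0 (dilation_factor_pos Hrm Hrp Hlam)) as [Dl_morph [Dl_inj [Dl_surj _]]].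
  exists (subst mul inv (D lam0) Gam S0).
  split; [intros P _; eapply subst_patch; eauto|].
  split; [intros a; eapply subst_point; eauto|].
  split.
  { intros gam P Ggam _. erewrite subst_translate by eauto.
    split; [intros x; eapply supp_translate; eauto|reflexivity]. }
  split; [eapply subst_local; eauto|].
  split.
  { intros S' _ S'_point S'_translate S'_local P HP.
    eapply subst_unique; eauto. intros gam Q Ggam HQ. apply (S'_translate gam Q Ggam HQ). }
  split; [intros P HP; eapply subst_construction; eauto|].
  split; [intros P gam n _ Ggam; eapply subst_iter_translate; eauto|].
  split; [intros P; eapply subst_full; eauto|].
  eapply subst_prod_continuous; eauto.
Qed.
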